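(* For every strategy profile $s$: if $\mathsf{SPE}(s)$ then $\mathsf{Nash}(s)$.
   Context: Let $P=\{A,B\}$ and $\mathrm{Choice}=\{d,r\}$; a payoff function is $f:P\to\mathbb{R}$. Strategy profiles are elements of the final coalgebra of $X\mapsto\mathbb{R}^P+P\times\mathrm{Choice}\times X\times X$ (finite or infinite trees $\langle f\rangle$ or $\langle p,c,s_d,s_r\rangle$); $\sim_s$ denotes bisimilarity of profiles. The payoff $\widehat{s}$ is the partial function given by $\widehat{\langle f\rangle}=f$, $\widehat{\langle p,d,s_d,s_r\rangle}=\widehat{s_d}$, $\widehat{\langle p,r,s_d,s_r\rangle}=\widehat{s_r}$ (undefined if the unfolding does not terminate). Convergence $\downarrow$: least predicate with $\downarrow(s)$ iff $s=\langle f\rangle$, or $s=\langle p,d,s_d,s_r\rangle\wedge\downarrow(s_d)$, or $s=\langle p,r,s_d,s_r\rangle\wedge\downarrow(s_r)$. Strong convergence $\Downarrow$: greatest predicate with $\Downarrow(s)$ iff $s=\langle f\rangle$, or $s=\langle p,c,s_d,s_r\rangle$ with $\downarrow(s),\Downarrow(s_d),\Downarrow(s_r)$. For a predicate $\Phi$, $\Box\Phi$ is the greatest predicate such that $\Box\Phi(s)$ iff $\Phi(s)$ and, whenever $s=\langle p,c,s_d,s_r\rangle$, $\Box\Phi(s_d)$ and $\Box\Phi(s_r)$. $\mathsf{PE}(s)$ holds iff $\Downarrow(s)$ and (if $s=\langle p,d,s_d,s_r\rangle$ then $\widehat{s_d}(p)\ge\widehat{s_r}(p)$) and (if $s=\langle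 p,r,s_d,s_r\rangle$ then $\widehat{s_r}(p)\ge\widehat{s_d}(p)$); $\mathsf{SPE}=\Box\,\mathsf{PE}$. For an agent $p$, the convertibility relation $\vdash_p\dashv$ is the least (inductively defined) relation such that: if $s\sim_s s'$ then $s\vdash_p\dashv s'$; if $s_1\vdash_p\dashv s_1'$ and $s_2\vdash_p\dashv s_2'$ then $\langle p,c,s_1,s_2\rangle\vdash_p\dashv\langle p,c',s_1',s_2'\rangle$ for any $c,c'\in\mathrm{Choice}$; and if $s_1\vdash_p\dashv s_1'$ and $s_2\vdash_p\dashv s_2'$ then $\langle p',c,s_1,s_2\rangle\vdash_p\dashv\langle p',c,s_1',s_2'\rangle$ for any agent $p'$ and $c\in\mathrm{Choice}$. $\mathsf{Nash}(s)$ means: for every agent $p$ and every profile $s'$ with $s\vdash_p\dashv s'$, the payoffs $\widehat{s}(p)$ and $\widehat{s'}(p)$ are defined and $\widehat{s}(p)\ge\widehat{s'}(p)$. *)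

From Stdlib Require Import Reals.
Open Scope R_scope.

Inductive Agent : Set := A | B.
Inductive Choice : Set := d | r.

(* Final coalgebra of X |-> R^P + P x Choice x X x X *)
CoInductive Strat : Type :=
| SLeaf : (Agent -> R) -> Strat
| SNode : Agent -> Choice -> Strat -> Strat -> Strat.

CoInductive bisim : Strat -> Strat -> Prop :=
| bisim_leaf : forall f, bisim (SLeaf f) (SLeaf f)
| bisim_node : forall p c s1 s2 s1' s2',
    bisim s1 s1' -> bisim s2 s2' -> bisim (SNode p c s1 s2) (SNode p c s1' s2').

(* graph of the partial payoff function s |-> \hat s : (Payoff s f) means \hat s = f *)
Inductive Payoff : Strat -> (Agent -> R) -> Prop :=
| Payoff_leaf : forall f, Payoff (SLeaf f) f
| Payoff_d : forall p sd sr f, Payoff sd f -> Payoff (SNode p d sd sr) f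
| Payoff_r : forall p sd sr f, Payoff sr f -> Payoff (SNode p r sd sr) f.

Inductive Conv : Strat -> Prop :=
| Conv_leaf : forall f, Conv (SLeaf f)
| Conv_d : forall p sd sr, Conv sd -> Conv (SNode p d sd sr)
| Conv_r : forall p sd sr, Conv sr -> Conv (SNode p r sd sr).

CoInductive SConv : Strat -> Prop :=
| SConv_leaf : forall f, SConv (SLeaf f)
| SConv_node : forall p c sd sr,
    Conv (SNode p c sd sr) -> SConv sd -> SConv sr -> SConv (SNode p c sd sr).

CoInductive Always (Phi : Strat -> Prop) : Strat -> Prop :=
| Always_leaf : forall f, Phi (SLeaf f) -> Always Phi (SLeaf f)
| Always_node : forall p c sd sr,
    Phi (SNode p c sd sr) -> Always Phi sd -> Always Phi sr ->
    Always Phi (SNode p c sd sr).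

Definition payoff_ge (p : Agent) (s1 s2 : Strat) : Prop :=
  exists f1 f2, Payoff s1 f1 /\ Payoff s2 f2 /\ f1 p >= f2 p.

Definition PE (s : Strat) : Prop :=
  SConv s /\
  (forall p sd sr, s = SNode p d sd sr -> payoff_ge p sd sr) /\
  (forall p sd sr, s = SNode p r sd sr -> payoff_ge p sr sd).

Definition SPE : Strat -> Prop := Always PE.

Inductive Convert (p : Agent) : Strat -> Strat -> Prop :=
| Convert_bisim : forall s s', bisim s s' -> Convert p s s'
| Convert_own : forall c c' s1 s2 s1' s2',
    Convert p s1 s1' -> Convert p s2 s2' ->
    Convert p (SNode p c s1 s2) (SNode p c' s1' s2')
| Convert_other : forall p' c s1 s2 s1' s2',
    Convert p s1 s1' -> Convert p s2 s2' ->
    Convert p (SNode p' c s1 s2) (SNode p' c s1' s2').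

Definition Nash (s : Strat) : Prop :=
  forall p s', Convert p s s' -> payoff_ge p s s'.

(* Bisimilar profiles
   have the same payoff; at a node of another agent the deviation keeps the
   choice, so the induction hypothesis for the chosen subgame applies directly;
   at a node of p, the equilibrium condition says the chosen subgame is at
   least as good for p as either subgame, and each subgame is at least as good
   as its deviated counterpart, so transitivity concludes. *)
From Stdlib Require Import Reals Lra.

Definition chosen (c : Choice) (sd sr : Strat) : Strat :=
  match c with d => sd | r => sr end.

Lemma Payoff_functional s f g : Payoff s f -> Payoff s g -> f = g.
Proof.
  intros Hf; revert g; induction Hf; intros g Hg; inversion Hg; subst; auto.
Qed.

Lemma Payoff_bisim s s' f : bisim s s' -> Payoff s f -> Payoff s' f.
Proof.
  intros Hb Hf; revert s' Hb; induction Hf; intros s' Hb; inversion Hb; subst;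
    constructor; auto.
Qed.

Lemma Payoff_node p c sd sr f :
  Payoff (chosen c sd sr) f -> Payoff (SNode p c sd sr) f.
Proof. destruct c; constructor; assumption. Qed.

Lemma Conv_Payoff s : Conv s -> exists f, Payoff s f.
Proof.
  induction 1 as [f | p sd sr _ [f Hf] | p sd sr _ [f Hf]];
    exists f; constructor; assumption.
Qed.

Lemma SConv_Conv s : SConv s -> Conv s.
Proof. destruct 1; [constructor | assumption]. Qed.

Lemma SPE_Payoff s : SPE s -> exists f, Payoff s f.
Proof.
  intros Hs; apply Conv_Payoff, SConv_Conv.
  destruct Hs as [f [Hconv _] | p c sd sr [Hconv _] _ _]; exact Hconv.
Qed.

Lemma payoff_ge_bisim p s s' f : Payoff s f -> bisim s s' -> payoff_ge p s s'.
Proof.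
  intros Hf Hb; exists f, f; repeat split; [assumption | | lra].
  exact (Payoff_bisim _ _ _ Hb Hf).
Qed.

Lemma payoff_ge_refl p s f : Payoff s f -> payoff_ge p s s.
Proof. intros Hf; exists f, f; repeat split; [assumption | assumption | lra]. Qed.

Lemma payoff_ge_trans p s1 s2 s3 :
  payoff_ge p s1 s2 -> payoff_ge p s2 s3 -> payoff_ge p s1 s3.
Proof.
  intros (f1 & f2 & H1 & H2 & H12) (g2 & g3 & G2 & G3 & G23).
  rewrite (Payoff_functional _ _ _ G2 H2) in G23.
  exists f1, g3; repeat split; [assumption | assumption | lra].
Qed.

Lemma payoff_ge_node p q q' c c' s1 s2 s1' s2' :
  payoff_ge p (chosen c s1 s2) (chosen c' s1' s2') ->
  payoff_ge p (SNode q c s1 s2) (SNode q' c' s1' s2').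
Proof.
  intros (f & f' & Hf & Hf' & Hge).
  exists f, f'; repeat split; [apply Payoff_node .. | ]; assumption.
Qed.

Lemma PE_chosen_best p c c' s1 s2 :
  PE (SNode p c s1 s2) -> payoff_ge p (chosen c s1 s2) (chosen c' s1 s2).
Proof.
  intros (Hconv & Hd & Hr).
  destruct (Conv_Payoff _ (SConv_Conv _ Hconv)) as [f Hf].
  assert (Hself : payoff_ge p (chosen c s1 s2) (chosen c s1 s2)).
  { destruct c; inversion Hf; subst; eapply payoff_ge_refl; eassumption. }
  destruct c, c'; auto.
Qed.

Lemma Convert_payoff_ge p s s' : Convert p s s' -> SPE s -> payoff_ge p s s'.
Proof.
  induction 1 as [s s' Hb | c c' s1 s2 s1' s2' _ IH1 _ IH2
                 | q c s1 s2 s1' s2' _ IH1 _ IH2]; intros Hs.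
  - destruct (SPE_Payoff _ Hs) as [f Hf]; exact (payoff_ge_bisim _ _ _ _ Hf Hb).
  - inversion Hs as [| ? ? ? ? Hpe H1 H2]; subst; apply payoff_ge_node.
    apply payoff_ge_trans with (chosen c' s1 s2).
    + exact (PE_chosen_best _ _ _ _ _ Hpe).
    + destruct c'; auto.
  - inversion Hs as [| ? ? ? ? _ H1 H2]; subst; apply payoff_ge_node.
    destruct c; auto.
Qed.

Theorem mainTheorem13 : forall s : Strat, SPE s -> Nash s.
Proof.
  intros s Hs p s' Hconv; exact (Convert_payoff_ge _ _ _ Hconv Hs).
Qed.
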